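(* Let $q'>0$, $e'\in(0,1)$, $q_{\max}>0$. There is no $(q,\omega)\in\mathcal D_2$ such that the orbits are linked for every $(e,\omega')\in\mathcal D_1$.
   Context: For $q>0$, $e\in[0,1]$ and angles $\omega,\omega'$, define $r_{\pm}=\frac{q(1+e)}{1\pm e\cos\omega}$, $r'_{\pm}=\frac{q'(1+e')}{1\pm e'\cos\omega'}$ (extended-real values allowed), $d^+=r'_+-r_+$, $d^-=r'_--r_-$. Linked orbits means $d^+<0<d^-$ or $d^-<0<d^+$. $\mathcal D_1=\{(e,\omega'):0\le e\le1,\ 0\le\omega'\le\pi\}$, $\mathcal D_2=\{(q,\omega):0<q\le q_{\max},\ 0\le\omega\le\pi/2\}$. *)

From Stdlib Require Import Reals Lra.
Open Scope R_scope.

Inductive ereal : Type := Fin (x : R) | PInf | NInf.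

(* Subtraction on extended reals; the undefined cases (oo - oo) are given an
   arbitrary value (Fin 0); they never arise in the theorem since e' < 1 makes
   r'_pm finite. *)
Definition esub (a b : ereal) : ereal :=
  match a, b with
  | Fin x, Fin y => Fin (x - y)
  | Fin _, PInf => NInf
  | Fin _, NInf => PInf
  | PInf, Fin _ => PInf
  | PInf, NInf => PInf
  | NInf, Fin _ => NInf
  | NInf, PInf => NInf
  | _, _ => Fin 0
  end.

Definition elt (a b : ereal) : Prop :=
  match a, b with
  | Fin x, Fin y => x < y
  | NInf, Fin _ | NInf, PInf | Fin _, PInf => True
  | _, _ => False
  end.

(* r = q(1+e)/(1 + s e cos w), s = +1 or -1.  For q > 0, e in [0,1] the
   denominator is >= 0 and the value is +oo exactly when it vanishes. *)
Definition rdist (s q e w : R) : ereal :=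
  let den := 1 + s * e * cos w in
  if Req_EM_T den 0 then PInf else Fin (q * (1 + e) / den).

Definition r_plus (q e w : R) : ereal := rdist 1 q e w.
Definition r_minus (q e w : R) : ereal := rdist (-1) q e w.

Definition d_plus (q e w q' e' w' : R) : ereal :=
  esub (r_plus q' e' w') (r_plus q e w).
Definition d_minus (q e w q' e' w' : R) : ereal :=
  esub (r_minus q' e' w') (r_minus q e w).

Definition linked (q e w q' e' w' : R) : Prop :=
  (elt (d_plus q e w q' e' w') (Fin 0) /\ elt (Fin 0) (d_minus q e w q' e' w'))
  \/ (elt (d_minus q e w q' e' w') (Fin 0) /\ elt (Fin 0) (d_plus q e w q' e' w')).

(* An orbit with e cos w = 0 has r+ = r-.  Taking the circular orbit e = 0
   against the primed orbit turned to w' = pi/2 makes both orbits of this kind,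
   so d+ = d-, and a single extended real cannot be both negative and positive. *)
From Stdlib Require Import Reals Lra.
Open Scope R_scope.

Lemma elt_0_asym (x : ereal) : ~ (elt x (Fin 0) /\ elt (Fin 0) x).
Proof. destruct x; simpl; intuition lra. Qed.

Lemma r_plus_eq_r_minus (q e w : R) :
  e * cos w = 0 -> r_plus q e w = r_minus q e w.
Proof.
  intros Hecw; unfold r_plus, r_minus, rdist.
  replace (1 + 1 * e * cos w) with (1 + -1 * e * cos w) by lra.
  reflexivity.
Qed.

Lemma not_linked_of_r_plus_eq_r_minus (q e w q' e' w' : R) :
  r_plus q e w = r_minus q e w -> r_plus q' e' w' = r_minus q' e' w' ->
  ~ linked q e w q' e' w'.
Proof.
  intros Hr Hr'; unfold linked, d_plus, d_minus; rewrite Hr, Hr'.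
  set (d := esub (r_minus q' e' w') (r_minus q e w)).
  intros [[Hneg Hpos] | [Hneg Hpos]]; exact (elt_0_asym d (conj Hneg Hpos)).
Qed.

Theorem mainTheorem7 (q' e' qmax : R) :
  0 < q' -> 0 < e' < 1 -> 0 < qmax ->
  ~ (exists q w : R,
       (0 < q <= qmax /\ 0 <= w <= PI / 2) /\
       (forall e w' : R, 0 <= e <= 1 -> 0 <= w' <= PI ->
          linked q e w q' e' w')).
Proof.
  intros _ _ _ [q [w [_ Hlinked]]].
  assert (Hpi := PI_RGT_0).
  apply (not_linked_of_r_plus_eq_r_minus q 0 w q' e' (PI / 2)).
  - apply r_plus_eq_r_minus; ring.
  - apply r_plus_eq_r_minus; rewrite cos_PI2; ring.
  - apply Hlinked; lra.
Qed.
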